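(* Fix an integer $k\ge 3$, and let $N$ range over positive integers divisible by $\mathrm{lcm}\{2,k\}$. Let $\alpha$ be a random permutation uniformly distributed on the conjugacy class $[2^{N/2}]$ of the symmetric group $S_N$, and let $\beta$ be a fixed permutation in the conjugacy class $[k^{N/k}]$. Then, as $N\to\infty$, $$\Pr[C_{\alpha\beta}\ge t] = O\left(\left(\tfrac{2}{3}\right)^{t/2} N\right),$$ with the implied constant independent of $N$ and $t$.
   Context: For a permutation $\pi$ of $\{1,\ldots,N\}$, $C_\pi$ denotes the number of cycles of $\pi$. The conjugacy class $[2^{N/2}]$ consists of the permutations of $\{1,\ldots,N\}$ all of whose cycles have length $2$; $[k^{N/k}]$ consists of the permutations all of whose cycles have length $k$. The product $\alpha\beta$ denotes the permutation obtained by first performing $\alpha$ and then $\beta$. *)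

From mathcomp Require Import all_boot all_order all_algebra all_fingroup.
Set Implicit Arguments. Unset Strict Implicit. Unset Printing Implicit Defensive.
Import Order.TTheory GRing.Theory Num.Theory.

(* s lies in the conjugacy class [m^{N/m}] of S_N: every cycle of s
   (= every orbit of <s> on {0,..,N-1}) has length exactly m. *)
Definition all_cycles_length (N m : nat) (s : {perm 'I_N}) : bool :=
  [forall x : 'I_N, #|porbit s x| == m].

Definition ncycles (N : nat) (s : {perm 'I_N}) : nat := #|porbits s|.

Definition unif_prob (R : numFieldType) (T : finType) (A : {set T}) (E : pred T) : R :=
  (#|[set x in A | E x]|%:R / #|A|%:R)%R.

(* Fix y with y^4 = 3/2 and, for s fixing every point outside V, let Z_V(s) be
   the sum of y^(2 C(a s)) over the fixed-point-free involutions a of V.  If a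
   pairs v with u then a = a' (u v), and a' (u v) s has e fewer cycles than
   a' s', where s' is (u v) s with u and v cut out of their cycles and e <= 2
   counts the cuts that split a cycle.  The cuts create at most 2e - 2 new
   fixed points, or 2e + 2 when u is one of the four points at distance at most
   2 from v on the cycle of s.  Summing over u, induction on |V| gives
   Z_V(s) <= (|V| - 1)!! (|V| + 1) y^(f(s) + |~V|), with f(s) the number of
   fixed points of s.  For V the whole set and beta without fixed points, the
   mean of (3/2)^(C(a beta)/2) is thus at most N + 1, and Markov's inequality
   concludes. *)

From mathcomp Require Import all_boot all_order all_algebra all_fingroup.
From mathcomp Require Import zify ring lra.
Set Implicit Arguments. Unset Strict Implicit. Unset Printing Implicit Defensive.
Import Order.TTheory GRing.Theory Num.Theory.

Fixpoint npairings n := if n is m.+2 then m.+1 * npairings m else (n == 0 : nat).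

Lemma npairings_rec n : 0 < n -> npairings n = n.-1 * npairings (n - 2).
Proof. by case: n => [|[|n]] //; rewrite subn2. Qed.

Section FixedPointFreeInvolutions.
Variable T : finType.
Implicit Types (V : {set T}) (a b : {perm T}) (u v z : T).

Definition fpf_involutions V : {set {perm T}} :=
  [set a : {perm T} | (a * a == 1)%g & [set z | a z == z] == ~: V].

Lemma fpf_involutionsP V a :
  reflect ((forall z, a (a z) = z) /\ (forall z, (a z == z) = (z \notin V)))
          (a \in fpf_involutions V).
Proof.
rewrite inE; apply: (iffP andP) => [[/eqP aa /eqP fixV]|[aa fixV]]; split.
- by move=> z; rewrite -permM aa perm1.
- by move=> z; rewrite -in_setC -fixV inE.
- by apply/eqP/permP => z; rewrite permM aa perm1.
- by apply/eqP/setP => z; rewrite !inE fixV.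
Qed.

Lemma fpf_involutions0 : fpf_involutions set0 = [set 1%g].
Proof.
apply/setP => a; rewrite [RHS]inE; apply/fpf_involutionsP/eqP => [[_ fixa]|->].
  by apply/permP => z; apply/eqP; rewrite perm1 fixa inE.
by split=> z; rewrite !perm1 ?eqxx ?inE.
Qed.

Lemma fpf_involutions_tperm V u v a : u \in V -> v \in V -> u != v ->
  ((a * tperm u v)%g \in fpf_involutions V) && ((a * tperm u v)%g v == u)
  = (a \in fpf_involutions (V :\: [set u; v])).
Proof.
move=> uV vV uNv; set t := tperm u v.
have tC b : tperm (b u) (b v) = t -> forall z, b (t z) = t (b z).
  by move=> buv z; rewrite -!permM conjgC tpermJ buv.
have tD z : z != u -> z != v -> t z = z by move=> zu zv; rewrite tpermD // eq_sym.
have inW z : z != u -> z != v -> (z \in V :\: [set u; v]) = (z \in V).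
  by move=> /negbTE zu /negbTE zv; rewrite !inE zu zv.
apply/andP/fpf_involutionsP => [[/fpf_involutionsP[bb fixb] /eqP bv]|[aa fixa]].
- set b := (a * t)%g in bb fixb bv.
  have bu : b u = v by rewrite -bv bb.
  have {}tC := tC b; rewrite bu bv tpermC in tC.
  have ab z : a z = t (b z) by rewrite permM tpermK.
  split=> z; rewrite !ab; first by rewrite -tC // tpermK bb.
  case: (eqVneq z u) => [->|zu]; first by rewrite bu tpermR !inE eqxx.
  case: (eqVneq z v) => [->|zv]; first by rewrite bv tpermL !inE eqxx orbT.
  by rewrite -tC // tD // inW // fixb.
- have au : a u = u by apply/eqP; rewrite fixa !inE eqxx.
  have av : a v = v by apply/eqP; rewrite fixa !inE eqxx orbT.
  have {}tC := tC a; rewrite au av in tC.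
  rewrite permM av tpermR; split => //; apply/fpf_involutionsP; split=> z; rewrite !permM.
    by rewrite -tC // tpermK aa.
  case: (eqVneq z u) => [->|zu]; first by rewrite au tpermL eq_sym (negbTE uNv) uV.
  case: (eqVneq z v) => [->|zv]; first by rewrite av tpermR (negbTE uNv) vV.
  by rewrite -tC // tD // fixa inW.
Qed.

Lemma sum_fpf_involutions (R : nmodType) (F : {perm T} -> R) V v : v \in V ->
  (\sum_(a in fpf_involutions V) F a =
   \sum_(u in V :\ v) \sum_(a in fpf_involutions (V :\: [set u; v])) F (a * tperm u v)%g)%R.
Proof.
move=> vV; rewrite (partition_big (fun a : {perm T} => a v) (mem (V :\ v))) /=.
  apply: eq_bigr => u /setD1P[uNv uV].
  rewrite (reindex_inj (mulIg (tperm u v))) /=.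
  by apply: eq_bigl => a; rewrite fpf_involutions_tperm.
move=> a /fpf_involutionsP[aa fixa]; have avNv : a v != v by rewrite fixa vV.
by rewrite !inE avNv -[a v \in V]negbK -fixa aa eq_sym.
Qed.

Lemma card_setD2 V u v : u \in V -> v \in V -> u != v ->
  #|V :\: [set u; v]| + 2 = #|V|.
Proof.
move=> uV vV uNv; rewrite [#|V|](cardsD1 v) [#|V :\ v|](cardsD1 u) !inE uNv uV vV.
by rewrite setDDl setUC addn2.
Qed.

Lemma card_fpf_involutions V : #|fpf_involutions V| = npairings #|V|.
Proof.
have [n] := ubnP #|V|; elim: n V => // n IH V; rewrite ltnS => leVn.
have [->|[v vV]] := set_0Vmem V; first by rewrite fpf_involutions0 cards1 cards0.
have V_gt0 : 0 < #|V| by apply/card_gt0P; exists v.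
rewrite -sum1_card (sum_fpf_involutions _ vV) (npairings_rec V_gt0).
rewrite (eq_bigr (fun _ => npairings (#|V| - 2))) ?sum_nat_const.
  by rewrite [#|V|](cardsD1 v) vV.
move=> u /setD1P[uNv uV]; rewrite sum1_card -(card_setD2 uV vV uNv) addnK IH //.
by have := card_setD2 uV vV uNv; lia.
Qed.
End FixedPointFreeInvolutions.

Section CutOut.
Variable T : finType.
Implicit Types (s a : {perm T}) (u v w z : T).

(* [cut_out s z] removes z from its cycle: z becomes fixed and its
   predecessor is sent to [s z]. *)
Definition cut_out s z : {perm T} := (s * tperm z (s z))%g.

Lemma cut_out_id s z : cut_out s z z = z.
Proof. by rewrite permM tpermR. Qed.

Lemma cut_out_fixed s z w : s w = w -> cut_out s z w = w.
Proof.
move=> sw; rewrite permM sw; have [<-|wNz] := eqVneq w z; first by rewrite sw tpermL.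
rewrite tpermD 1?eq_sym //; apply: contra_neq wNz => szw.
by apply: (@perm_inj _ s); rewrite sw szw.
Qed.

Lemma mul_cut_out a s z : a z = z -> (a * cut_out s z = cut_out (a * s) z)%g.
Proof. by move=> az; rewrite /cut_out mulgA permM az. Qed.

Lemma card_porbits_cut_out s z : #|porbits (cut_out s z)| = #|porbits s| + (s z != z).
Proof.
rewrite -(porbitsV (cut_out s z)) invMg tpermV.
have := porbits_mul_tperm s^-1 z (s z).
have -> : z \in porbit s^-1 (s z) by have := mem_porbit s^-1 1 (s z); rewrite expg1 permK.
by rewrite /= addn0 porbitsV eq_sym.
Qed.

Definition nfixed s := #|[set z | s z == z]|.

Lemma nfixed_cut_out s z :
  nfixed (cut_out s z) <= nfixed s + (s z != z) + ((s z != z) && (s (s z) == z)).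
Proof.
have [sz|szNz] := eqVneq (s z) z; first by rewrite /cut_out sz tperm1 mulg1 !addn0.
rewrite /nfixed /=.
pose two_cycle := [set w | (s (s z) == z) && (w == s z)].
have two_cycle_le : #|two_cycle| <= (s (s z) == z).
  rewrite /two_cycle; case: eqP => ssz /=.
    by rewrite -(cards1 (s z)) subset_leq_card //; apply/subsetP => w; rewrite !inE.
  by rewrite leqn0 cards_eq0; apply/eqP/setP => w; rewrite !inE.
apply: leq_trans (_ : _ <= #|[set w | s w == w] :|: [set z] :|: two_cycle|) _.
  apply/subset_leq_card/subsetP => w; rewrite !inE permM.
  case: tpermP => [sw /eqP szw|/perm_inj-> _|_ _ ->]; rewrite ?eqxx ?orbT //.
  by rewrite szw sw !eqxx orbT.
rewrite -addnA; apply: leq_trans (leq_card_setU _ _).1 _.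
by rewrite addnA leq_add // (leq_trans (leq_card_setU _ _).1) // cards1.
Qed.

Lemma nfixedD2 s u v : u != v ->
  nfixed s = (s u == u) + (s v == v) + #|[set z | s z == z] :\ u :\ v|.
Proof.
move=> uNv; rewrite /nfixed (cardsD1 u) (cardsD1 v (_ :\ u)) !inE (eq_sym v) uNv.
by rewrite addnA.
Qed.

Lemma nfixed_tperm_mul s u v : u != v ->
  nfixed (tperm u v * s) + (s u == u) + (s v == v) = nfixed s + (s v == u) + (s u == v).
Proof.
move=> uNv; rewrite !(nfixedD2 _ uNv) !permM tpermL tpermR.
have -> : [set z | (tperm u v * s)%g z == z] :\ u :\ v = [set z | s z == z] :\ u :\ v.
  apply/setP => z; rewrite !inE permM.
  by case: (eqVneq z v) => //= zNv; case: (eqVneq z u) => //= zNu; rewrite tpermD // eq_sym.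
lia.
Qed.
End CutOut.

Section Detach.
Variable T : finType.
Implicit Types (s a : {perm T}) (u v : T).

Definition detach s u v := cut_out (cut_out (tperm u v * s) u) v.

Definition cycle_nbhd s v : {set T} := [set:: [:: s v; s^-1 v; s (s v); s^-1 (s^-1 v)]%g].

Lemma card_cycle_nbhd s v : #|cycle_nbhd s v| <= 4.
Proof. by rewrite cardsE card_size. Qed.

Lemma detach_fix_u s u v : u != v -> detach s u v u = u.
Proof. by move=> uNv; apply: cut_out_fixed; apply: cut_out_id. Qed.

Lemma detach_fix_v s u v : detach s u v v = v.
Proof. exact: cut_out_id. Qed.

Lemma detach_fixed s u v w : u != w -> v != w -> s w = w -> detach s u v w = w.
Proof. by move=> uNw vNw sw; do 2!apply: cut_out_fixed; rewrite permM tpermD. Qed.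

Lemma card_porbits_detach s u v a : a u = u -> a v = v ->
  #|porbits (a * detach s u v)| =
  #|porbits (a * tperm u v * s)| + (s v != u) + (cut_out (tperm u v * s) u v != v).
Proof.
move=> au av; rewrite /detach mul_cut_out // card_porbits_cut_out permM av.
by rewrite mul_cut_out // card_porbits_cut_out permM au permM tpermL mulgA.
Qed.

Lemma nfixed_detach s u v : u != v ->
  nfixed (detach s u v) + 2 <=
  2 * ((s v != u) + (cut_out (tperm u v * s) u v != v)) + nfixed s + 4 * (u \in cycle_nbhd s v).
Proof.
move=> uNv; set sw := (tperm u v * s)%g; set cu := cut_out sw u.
have sw_u : sw u = s v by rewrite permM tpermL.
have sw_v : sw v = s u by rewrite permM tpermR.
have := nfixed_tperm_mul s uNv; have := nfixed_cut_out sw u; have := nfixed_cut_out cu v.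
rewrite -/sw sw_u /detach -/cu.
have [_|] := boolP (u \in cycle_nbhd s v); first by lia.
rewrite !inE !negb_or -!(canF_eq (permK s)) ![u == _]eq_sym.
case/and4P=> /negPf svNu /negPf suNv ssvNu ssuNv; rewrite svNu suNv /= muln0 addn0.
have t1 : (sw (s v) == u) = (s u == u) && (s v == v).
  have [->|svNv] := eqVneq (s v) v; first by rewrite sw_v andbT.
  by rewrite permM tpermD ?(negPf ssvNu) ?andbF // eq_sym ?svNu.
have cu_v : cu v = tperm u (s v) (s u) by rewrite permM sw_u sw_v.
have [suu|suNu] := eqVneq (s u) u.
  by rewrite t1 cu_v suu tpermL; lia.
have {}cu_v : cu v = s u by rewrite cu_v tpermD // 1?eq_sym // (inj_eq perm_inj).
have t2 : (cu (s u) == v) <= (s v == v).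
  have sw_su : sw (s u) = s (s u) by rewrite permM tpermD // eq_sym ?suNv.
  rewrite permM sw_su sw_u.
  case: tpermP => [_|/perm_inj suv|_ _]; rewrite ?(negPf ssuNv) //.
  by rewrite suv eqxx in suNv.
by rewrite t1 cu_v (negPf suNu); lia.
Qed.
End Detach.

Section MomentBound.
Local Open Scope ring_scope.
Variables (T : finType) (R : realFieldType) (y : R).
Hypotheses (y_ge1 : 1 <= y) (y4_le : 2 * y ^+ 4 <= 3).

Let y_gt0 : 0 < y. Proof. exact: lt_le_trans ltr01 y_ge1. Qed.

Lemma sum_expn_indicator_le (A B : {set T}) : (#|B| <= 4)%N ->
  \sum_(u in A) y ^+ (4 * (u \in B)) <= #|A|%:R + 2.
Proof.
move=> cardB; rewrite (big_setID B) /=.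
rewrite (eq_bigr (fun _ => y ^+ 4)) => [|u /setIP[_ ->] //].
rewrite [X in _ + X](eq_bigr (fun _ => 1)) => [|u /setDP[_ /negPf->]]; last by rewrite muln0.
rewrite !sumr_const -(cardsID B A) natrD.
have : #|A :&: B|%:R <= 4 :> R by rewrite ler_nat (leq_trans (subset_leq_card (subsetIr A B))).
have : 1 <= y ^+ 4 by rewrite exprn_ege1.
move: (y ^+ 4) y4_le => z; rewrite -mulr_natl -[1 *+ _]mulr_natl mulr1; nra.
Qed.

Lemma cycle_moment_step (V : {set T}) (s : {perm T}) u v (K : R) :
  0 <= K -> u \in V -> v \in V -> u != v ->
  \sum_(a in fpf_involutions (V :\: [set u; v])) y ^+ (2 * #|porbits (a * detach s u v)|)
    <= K * y ^+ (nfixed (detach s u v) + #|~: (V :\: [set u; v])|) ->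
  \sum_(a in fpf_involutions (V :\: [set u; v])) y ^+ (2 * #|porbits (a * tperm u v * s)|)
    <= K * y ^+ (nfixed s + #|~: V|) * y ^+ (4 * (u \in cycle_nbhd s v)).
Proof.
move=> K_ge0 uV vV uNv; set W := V :\: [set u; v].
set e := ((s v != u) + (cut_out (tperm u v * s) u v != v))%N.
have cardCW : #|~: W| = (#|~: V| + 2)%N.
  by have := cardsC W; have := cardsC V; have := card_setD2 uV vV uNv; rewrite -/W; lia.
have shift :
    (\sum_(a in fpf_involutions W) y ^+ (2 * #|porbits (a * tperm u v * s)|)) * y ^+ (2 * e)
    = \sum_(a in fpf_involutions W) y ^+ (2 * #|porbits (a * detach s u v)|).
  rewrite mulr_suml; apply: eq_bigr => a /fpf_involutionsP[_ fixa].
  have fixW z : z \notin W -> a z = z by move=> zW; apply/eqP; rewrite fixa.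
  rewrite -exprD -mulnDr addnA.
  by rewrite (card_porbits_detach s (fixW u _) (fixW v _)) // /W !inE eqxx ?orbT.
have y2e_gt0 : 0 < y ^+ (2 * e) by rewrite exprn_gt0.
move=> IH; rewrite -(ler_pM2r y2e_gt0) shift; apply: le_trans IH _.
rewrite -!mulrA -!exprD ler_wpM2l // ler_weXn2l // cardCW.
by have := nfixed_detach s uNv; rewrite /e; lia.
Qed.

Lemma cycle_moment_bound (V : {set T}) (s : {perm T}) : (forall z, z \notin V -> s z = z) ->
  \sum_(a in fpf_involutions V) y ^+ (2 * #|porbits (a * s)|)
    <= (npairings #|V| * #|V|.+1)%:R * y ^+ (nfixed s + #|~: V|).
Proof.
have [n] := ubnP #|V|; elim: n V s => // n IH V s; rewrite ltnS => leVn fixs.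
have [V0|[v vV]] := set_0Vmem V.
  have -> : s = 1%g by apply/permP => z; rewrite perm1 fixs // V0 inE.
  rewrite V0 fpf_involutions0 big_set1 mul1g cards0 mul1r setC0 cardsT.
  have -> : nfixed (1 : {perm T}) = #|T|.
    by rewrite /nfixed -cardsT; apply: eq_card => z; rewrite !inE perm1 eqxx.
  by rewrite ler_weXn2l // mul2n -addnn leq_add // leq_imset_card.
have V_gt0 : (0 < #|V|)%N by apply/card_gt0P; exists v.
set K := (npairings (#|V| - 2) * #|V|.-1)%:R : R.
have step u : u \in V :\ v ->
    \sum_(a in fpf_involutions (V :\: [set u; v])) y ^+ (2 * #|porbits (a * tperm u v * s)|)
    <= K * y ^+ (nfixed s + #|~: V|) * y ^+ (4 * (u \in cycle_nbhd s v)).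
  move=> /setD1P[uNv uV]; apply: cycle_moment_step => //.
  have -> : K = (npairings #|V :\: [set u; v]| * #|V :\: [set u; v]|.+1)%:R.
    by rewrite /K -(card_setD2 uV vV uNv) addnK addn2.
  apply: IH; first by have := card_setD2 uV vV uNv; lia.
  move=> z; rewrite !inE negb_and negbK => /orP[/orP[]/eqP->|zV].
  - exact: detach_fix_u.
  - exact: detach_fix_v.
  by apply: detach_fixed (fixs z zV); apply: contraNneq zV => <-.
rewrite (sum_fpf_involutions _ vV); apply: le_trans (ler_sum _ step) _.
rewrite -mulr_sumr; apply: le_trans (ler_wpM2l _ (sum_expn_indicator_le _ (card_cycle_nbhd s v))) _.
  by rewrite mulr_ge0 ?ler0n ?exprn_ge0 ?ltW.
rewrite mulrAC ler_pM2r ?exprn_gt0 // [#|V :\ v|](_ : _ = #|V|.-1); last first.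
  by rewrite [#|V|](cardsD1 v) vV.
rewrite (npairings_rec V_gt0) -natrD -natrM ler_nat (_ : #|V|.-1 + 2 = #|V|.+1)%N; last by lia.
by rewrite (mulnC (npairings _)).
Qed.

End MomentBound.

Lemma card_porbit_eq2 (T : finType) (s : {perm T}) z :
  (#|porbit s z| == 2) = (s z != z) && (s (s z) == z).
Proof.
apply/eqP/andP => [cs|[szNz /eqP ssz]].
  have := uniq_traject_porbit s z; have := iter_porbit s z.
  by rewrite cs /= inE andbT eq_sym => -> ->.
have -> : porbit s z = [set z; s z].
  apply/setP => w; rewrite !inE; apply/porbitP/orP => [[i ->]|[]/eqP->].
  - rewrite permX; elim: i => [|i] /=; first by left.
    by case=> /eqP->; [right | left; apply/eqP].
  - by exists 0; rewrite expg0 perm1.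
  - by exists 1; rewrite expg1.
by rewrite cards2 eq_sym szNz.
Qed.

Lemma all_cycles_length2E N :
  [set a : {perm 'I_N} | all_cycles_length 2 a] = fpf_involutions setT.
Proof.
apply/setP => a; rewrite inE; apply/forallP/fpf_involutionsP => [cyc|[aa fixa] z].
  split=> z; have := cyc z; rewrite card_porbit_eq2 => /andP[azNz /eqP aaz] //.
  by rewrite (negPf azNz) inE.
by rewrite card_porbit_eq2 aa fixa inE eqxx.
Qed.

Lemma nfixed_all_cycles_length N k (s : {perm 'I_N}) :
  (1 < k)%N -> all_cycles_length k s -> nfixed s = 0%N.
Proof.
move=> k_gt1 /forallP cyc; apply/eqP; rewrite cards_eq0; apply/eqP/setP => z; rewrite !inE.
apply: contraTF k_gt1 => /eqP sz; rewrite -(eqP (cyc z)) -ltnNge ltnS -(cards1 z).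
by apply/subset_leq_card/subsetP => w /porbitP[i ->]; rewrite inE permX_fix.
Qed.

Section Markov.
Local Open Scope ring_scope.
Variables (R : realFieldType) (T : finType) (A : {set T}) (f : T -> nat) (w : R).
Hypothesis w_ge1 : 1 <= w.

Lemma markov_unif_prob t :
  unif_prob R A (fun a => (t <= f a)%N) * w ^+ t <= (\sum_(a in A) w ^+ f a) / #|A|%:R.
Proof.
rewrite /unif_prob mulrAC; apply: ler_wpM2r; first by rewrite invr_ge0 ler0n.
have -> : #|[set a in A | (t <= f a)%N]|%:R * w ^+ t = \sum_(a in A | (t <= f a)%N) w ^+ t.
  by rewrite sumr_const mulr_natl cardsE.
apply: (le_trans (ler_sum _ (fun a ta => ler_weXn2l w_ge1 (andP ta).2))).
rewrite [X in _ <= X](bigID (fun a => (t <= f a)%N)) /= lerDl sumr_ge0 // => a _.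
by rewrite exprn_ge0 // (le_trans ler01).
Qed.

End Markov.

Local Open Scope ring_scope.

Lemma mean_expn_ncycles_le (R : rcfType) N k (beta : {perm 'I_N}) :
  (1 < k)%N -> all_cycles_length k beta ->
  (\sum_(a in [set a : {perm 'I_N} | all_cycles_length 2 a])
     Num.sqrt (3 / 2 : R) ^+ ncycles (a * beta))
  / #|[set a : {perm 'I_N} | all_cycles_length 2 a]|%:R <= N.+1%:R.
Proof.
move=> k_gt1 beta_k; set x := Num.sqrt (3 / 2 : R); set y := Num.sqrt x.
have x2 : x ^+ 2 = 3 / 2 by rewrite sqr_sqrtr // divr_ge0 ?ler0n.
have x_ge1 : 1 <= x by rewrite -sqrtr1 ler_sqrt ?divr_ge0 ?ler0n //; lra.
have y_ge1 : 1 <= y by rewrite -sqrtr1 ler_sqrt ?(le_trans ler01).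
have y2 : y ^+ 2 = x by rewrite sqr_sqrtr // (le_trans ler01).
have y4 : 2 * y ^+ 4 <= 3 by rewrite (exprM y 2 2) y2 x2; lra.
have := cycle_moment_bound y_ge1 y4 (V := setT) (s := beta).
move/(_ (fun z zT => False_ind _ (negP zT (in_setT z)))).
rewrite (nfixed_all_cycles_length k_gt1 beta_k) setCT cards0 expr0 mulr1.
rewrite all_cycles_length2E card_fpf_involutions cardsT card_ord natrM.
under eq_bigr do rewrite exprM y2.
have [->|A_gt0] := posnP (npairings N); first by rewrite invr0 mulr0.
by move=> moment; rewrite ler_pdivrMr ?ltr0n // mulrC.
Qed.

Theorem theorem1p2 (R : rcfType) (k : nat) (hk : (3 <= k)%N) :
  exists C : R, exists N0 : nat,
    forall N : nat, (N0 <= N)%N -> (0 < N)%N -> (lcmn 2 k %| N)%N ->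
    forall beta : {perm 'I_N}, all_cycles_length k beta ->
    forall t : nat,
      (unif_prob R [set a : {perm 'I_N} | all_cycles_length 2 a]
                   (fun a => (t <= ncycles (a * beta))%N)
       <= C * (Num.sqrt (2 / 3)) ^+ t * N%:R)%R.
Proof.
exists 2, 0%N => N _ N_gt0 _ beta beta_k t.
set x := Num.sqrt (3 / 2 : R); set q := Num.sqrt (2 / 3 : R) ^+ t.
have x_ge1 : 1 <= x by rewrite -sqrtr1 ler_sqrt ?divr_ge0 ?ler0n //; lra.
have mean := mean_expn_ncycles_le R (ltnW hk) beta_k.
have := le_trans (markov_unif_prob _ _ x_ge1 t) mean.
set P := unif_prob _ _ _ => tail.
have -> : P = P * x ^+ t * q.
  rewrite -mulrA -exprMn -sqrtrM ?divr_ge0 ?ler0n //.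
  by rewrite (_ : 3 / 2 * (2 / 3) = 1) ?sqrtr1 ?expr1n ?mulr1 //; field.
have q_ge0 : 0 <= q := exprn_ge0 _ (sqrtr_ge0 _).
apply: le_trans (ler_wpM2r q_ge0 tail : _ <= N.+1%:R * q) _.
by rewrite mulrAC; apply: ler_wpM2r; rewrite // -natrM ler_nat; lia.
Qed.
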